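(* Let $D=\mathrm{diag}(1,-1,1,-1,\ldots)=(1,-x)$, let $P=\bigl[\binom{i}{j}\bigr]_{i,j\ge 0}=\bigl(\tfrac{1}{1-x},\tfrac{x}{1-x}\bigr)$ be the Pascal matrix, and let $\mathbb{F}^{\rm S}=(1,x(1+x))$ and $\mathbb{L}^{\rm S}=(1+2x,x(1+x))$. Let $C(x)=\frac{1-\sqrt{1-4x}}{2x}$, $M(x)=\frac{1-x-\sqrt{(1-x)^2-4x^2}}{2x^2}$ and $W(x)=\sum_{n\ge0}\binom{2n}{n}x^n$. Then: (a) $D(\mathbb{F}^{\rm S})^{-1}D=(1,xC(x))=P\left(\frac{M(x)-xM(x)-x^2M(x)^2}{1+x},\frac{x+x^2M(x)}{1+x}\right)$; (b) $D(\mathbb{L}^{\rm S})^{-1}D=\left(\frac{1}{1-2xC(x)},xC(x)\right)=(W(x),x)\,P\left(\frac{M(x)-xM(x)-x^2M(x)^2}{1+x},\frac{x+x^2M(x)}{1+x}\right)$; (c) $D(\mathbb{L}^{\rm S})^{-1}D=\left(\frac{1}{1-2xC(x)},x\right)D(\mathbb{F}^{\rm S})^{-1}D=(W(x),x)\,D(\mathbb{F}^{\rm S})^{-1}D=D(\mathbb{F}^{\rm S})^{-1}D\left(\frac{1}{1-2x},x\right)$.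
   Context: All matrices are infinite with rows and columns indexed by $0,1,2,\ldots$. For formal power series $g(x)=g_0+g_1x+\cdots$ and $f(x)=f_1x+f_2x^2+\cdots$, $(g(x),f(x))$ denotes the infinite lower triangular matrix whose $j$-th column ($j=0,1,\ldots$) has generating function $g(x)f(x)^j$; it is a Riordan matrix when $g_0\neq0$ and $f_1\neq0$. Riordan matrices form a group under matrix multiplication, with $(g(x),f(x))(h(x),l(x))=(g(x)h(f(x)),l(f(x)))$ and $(g(x),f(x))^{-1}=(1/g(\bar f(x)),\bar f(x))$, where $\bar f$ is the compositional inverse of $f$. *)

From mathcomp Require Import all_boot all_order all_algebra.
Set Implicit Arguments. Unset Strict Implicit. Unset Printing Implicit Defensive.
Import Order.TTheory GRing.Theory Num.Theory.
Local Open Scope ring_scope.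

Definition series (R : Type) := nat -> R.
Definition mat (R : Type) := nat -> nat -> R.

Section PowerSeries.
Variable R : numFieldType.

Definition ps_const (c : R) : series R := fun n => if n is 0%N then c else 0.
Definition ps_X : series R := fun n => (n == 1%N)%:R.
Definition ps_add (f g : series R) : series R := fun n => f n + g n.
Definition ps_opp (f : series R) : series R := fun n => - f n.
Definition ps_sub (f g : series R) : series R := ps_add f (ps_opp g).
Definition ps_scale (c : R) (f : series R) : series R := fun n => c * f n.
Definition ps_mul (f g : series R) : series R :=
  fun n => \sum_(i < n.+1) f i * g (n - i)%N.
Definition ps_pow (f : series R) (k : nat) : series R :=
  iter k (ps_mul f) (ps_const 1).
(* multiplicative inverse of a series with f 0 != 0:
   1/f = f0^-1 * sum_k h^k,  h = 1 - f/f0 (h 0 = 0, so only k <= n matter) *)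
Definition ps_inv (f : series R) : series R :=
  fun n => (f 0%N)^-1 *
    \sum_(k < n.+1) ps_pow (ps_sub (ps_const 1) (ps_scale (f 0%N)^-1 f)) k n.
Definition ps_div (f g : series R) : series R := ps_mul f (ps_inv g).
(* division by x of a series with zero constant term *)
Definition ps_divX (f : series R) : series R := fun n => f n.+1.
Definition gbinom (a : R) (k : nat) : R :=
  (\prod_(i < k) (a - i%:R)) / (k`!)%:R.
(* square root of a series with constant term 1, via the binomial series
   sqrt(1 + u) = sum_k binom(1/2, k) u^k  (u 0 = 0) *)
Definition ps_sqrt (f : series R) : series R :=
  fun n => \sum_(k < n.+1)
             gbinom (1 / 2%:R) k * ps_pow (ps_sub f (ps_const 1)) k n.

Definition ps_C : series R :=
  ps_divX (ps_scale (1 / 2%:R)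
    (ps_sub (ps_const 1) (ps_sqrt (ps_sub (ps_const 1) (ps_scale 4%:R ps_X))))).
Definition ps_M : series R :=
  let one_m_x := ps_sub (ps_const 1) ps_X in
  ps_divX (ps_divX (ps_scale (1 / 2%:R)
    (ps_sub one_m_x
       (ps_sqrt (ps_sub (ps_pow one_m_x 2) (ps_scale 4%:R (ps_pow ps_X 2))))))).
Definition ps_W : series R := fun n => ('C(n.*2, n))%:R.

(* infinite matrices; all matrices below are lower triangular, for which the
   matrix product (A B)_{ij} = sum_k A_{ik} B_{kj} reduces to k <= i *)
Definition mat_mul (A B : mat R) : mat R :=
  fun i j => \sum_(k < i.+1) A i k * B k j.
Definition mat_id : mat R := fun i j => (i == j)%:R.
Definition mat_pow (A : mat R) (m : nat) : mat R := iter m (mat_mul A) mat_id.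
(* inverse of a lower triangular matrix A with nonzero diagonal:
   A = Diag (I - N), N strictly lower triangular, so
   A^-1 = (sum_m N^m) Diag^-1, and N^m i j = 0 for m > i - j *)
Definition mat_inv (A : mat R) : mat R :=
  let N := fun i j => (i == j)%:R - A i j / A i i in
  fun i j => if (i < j)%N then 0
             else (\sum_(m < i.+1) mat_pow N m i j) / A j j.

Definition riordan (g f : series R) : mat R :=
  fun n k => ps_mul g (ps_pow f k) n.

Definition D_mat : mat R := riordan (ps_const 1) (ps_opp ps_X).
Definition pascal_mat : mat R :=
  riordan (ps_inv (ps_sub (ps_const 1) ps_X))
          (ps_div ps_X (ps_sub (ps_const 1) ps_X)).
Definition FS : mat R :=
  riordan (ps_const 1) (ps_mul ps_X (ps_add (ps_const 1) ps_X)).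
Definition LS : mat R :=
  riordan (ps_add (ps_const 1) (ps_scale 2%:R ps_X))
          (ps_mul ps_X (ps_add (ps_const 1) ps_X)).

End PowerSeries.

From HB Require Import structures.
From mathcomp Require Import all_boot all_order all_algebra.
From mathcomp Require Import boolp ring.
Set Implicit Arguments. Unset Strict Implicit. Unset Printing Implicit Defensive.
Import GRing.Theory Num.Theory.
Local Open Scope ring_scope.

(** Power series over R form a commutative ring, and composition
   with a series without constant term is a ring morphism; both facts reduce to
   polynomial algebra on truncations.  This gives the product rule
   (g, f) (h, l) = (g h(f), l(f)) for Riordan matrices; since a lower triangular
   matrix with nonzero diagonal has a unique right inverse, (g, f)^-1 = (h, l) as
   soon as g h(f) = 1 and l(f) = x, and conjugation by D maps (g, f) to
   (g(-x), -f(-x)).  Everything about C follows from xC being the unique root of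
   u^2 - u + x vanishing at 0: the compositional inverse of x(1+x) is -xC(-x),
   1 - 2xC = sqrt(1-4x) = 1/W, and the substitution x = y/(1+y), which turns the
   equation of M into the equation of C, gives the factorization through P. *)

(** * The ring of formal power series *)

Section PowerSeriesRing.
Variable R : numFieldType.
Implicit Types (a b f g h l u : series R) (p q : {poly R}) (c d : R).

Lemma ps_ext a b : a =1 b -> a = b.
Proof. exact: funext. Qed.

(* Coefficients below N of products and compositions only depend on the
   truncations at N, so polynomial algebra proves the ring laws. *)
Definition trunc N a : {poly R} := \poly_(i < N) a i.
Definition agree N p q := forall i, (i < N)%N -> p`_i = q`_i.

Lemma coef_trunc N a i : (trunc N a)`_i = if (i < N)%N then a i else 0.
Proof. by rewrite coef_poly. Qed.

Lemma agree_mul N p p' q q' :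
  agree N p p' -> agree N q q' -> agree N (p * q) (p' * q').
Proof.
move=> hp hq i hi; rewrite !coefM; apply: eq_bigr => j _.
by rewrite hp ?hq // (leq_ltn_trans _ hi) ?leq_subr // -ltnS.
Qed.

Lemma ps_mul_trunc N a b i : (i < N)%N -> ps_mul a b i = (trunc N a * trunc N b)`_i.
Proof.
move=> hi; rewrite coefM; apply: eq_bigr => j _.
by rewrite !coef_trunc !(leq_ltn_trans _ hi) ?leq_subr // -ltnS.
Qed.

Lemma trunc_mul N a b : agree N (trunc N (ps_mul a b)) (trunc N a * trunc N b).
Proof. by move=> i hi; rewrite coef_trunc hi (ps_mul_trunc _ _ hi). Qed.

Lemma ps_mulA : associative (@ps_mul R).
Proof.
move=> a b c; apply: ps_ext => n; have ltn := ltnSn n.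
rewrite (ps_mul_trunc _ _ ltn) [RHS](ps_mul_trunc _ _ ltn).
rewrite (agree_mul (fun _ _ => erefl) (@trunc_mul _ _ _)) //.
by rewrite (agree_mul (@trunc_mul _ _ _) (fun _ _ => erefl)) // mulrA.
Qed.

Lemma ps_mulC : commutative (@ps_mul R).
Proof.
move=> a b; apply: ps_ext => n; have ltn := ltnSn n.
by rewrite (ps_mul_trunc _ _ ltn) [RHS](ps_mul_trunc _ _ ltn) mulrC.
Qed.

Lemma ps_mul1 : left_id (ps_const 1) (@ps_mul R).
Proof.
move=> a; apply: ps_ext => n; rewrite /ps_mul big_ord_recl /= mul1r subn0.
by rewrite big1 ?addr0 // => i _; rewrite mul0r.
Qed.

Lemma ps_mulDl : left_distributive (@ps_mul R) (@ps_add R).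
Proof.
move=> a b c; apply: ps_ext => n; rewrite /ps_mul /ps_add -big_split /=.
by apply: eq_bigr => i _; rewrite mulrDl.
Qed.

Lemma ps_addA : associative (@ps_add R).
Proof. by move=> a b c; apply: ps_ext => n; rewrite /ps_add addrA. Qed.

Lemma ps_addC : commutative (@ps_add R).
Proof. by move=> a b; apply: ps_ext => n; rewrite /ps_add addrC. Qed.

Lemma ps_add0 : left_id (ps_const 0) (@ps_add R).
Proof. by move=> a; apply: ps_ext => -[|n]; rewrite /ps_add /= add0r. Qed.

Lemma ps_addN : left_inverse (ps_const 0) (@ps_opp R) (@ps_add R).
Proof. by move=> a; apply: ps_ext => -[|n]; rewrite /ps_add /ps_opp /= addNr. Qed.

Lemma ps_const1_neq0 : ps_const (1 : R) != ps_const 0.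
Proof. by apply/eqP => /(congr1 (fun f : series R => f 0%N))/eqP; rewrite oner_eq0. Qed.

HB.instance Definition _ := Choice.copy (series R) (nat -> R).
HB.instance Definition _ :=
  GRing.isZmodule.Build (series R) ps_addA ps_addC ps_add0 ps_addN.
HB.instance Definition _ := GRing.Zmodule_isComNzRing.Build (series R)
  ps_mulA ps_mulC ps_mul1 ps_mulDl ps_const1_neq0.
Local Notation X := (ps_X R).

Lemma ps_addE a b : ps_add a b = a + b. Proof. by []. Qed.
Lemma ps_oppE a : ps_opp a = - a. Proof. by []. Qed.
Lemma ps_subE a b : ps_sub a b = a - b. Proof. by []. Qed.
Lemma ps_mulE a b : ps_mul a b = a * b. Proof. by []. Qed.
Lemma ps_const1E : ps_const 1 = 1 :> series R. Proof. by []. Qed.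

Lemma ps_coefD a b n : (a + b) n = a n + b n. Proof. by []. Qed.
Lemma ps_coefN a n : (- a) n = - a n. Proof. by []. Qed.
Lemma ps_coefB a b n : (a - b) n = a n - b n. Proof. by []. Qed.
Lemma ps_coef0 n : (0 : series R) n = 0. Proof. by case: n. Qed.
Lemma ps_coef1 n : (1 : series R) n = (n == 0)%:R. Proof. by case: n. Qed.
Lemma ps_coefM a b n : (a * b) n = \sum_(i < n.+1) a i * b (n - i)%N.
Proof. by []. Qed.
Lemma ps_coefM_trunc N a b i : (i < N)%N -> (a * b) i = (trunc N a * trunc N b)`_i.
Proof. exact: ps_mul_trunc. Qed.

Lemma ps_coefM0 a b : (a * b) 0%N = a 0%N * b 0%N.
Proof. by rewrite ps_coefM big_ord1. Qed.

Lemma ps_coef_sum I (r : seq I) (P : pred I) (F : I -> series R) n :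
  (\sum_(i <- r | P i) F i) n = \sum_(i <- r | P i) F i n.
Proof.
elim: r => [|x r ih]; first by rewrite !big_nil ps_coef0.
by rewrite !big_cons; case: (P x); rewrite ?ps_coefD ih.
Qed.

Lemma ps_coefCM c a n : (ps_const c * a) n = c * a n.
Proof.
by rewrite ps_coefM big_ord_recl subn0 big1 ?addr0 // => i _; rewrite mul0r.
Qed.

Lemma ps_constD c d : ps_const (c + d) = ps_const c + ps_const d.
Proof. by apply: ps_ext => -[|n]; rewrite ps_coefD //= addr0. Qed.

Lemma ps_constN c : ps_const (- c) = - ps_const c.
Proof. by apply: ps_ext => -[|n]; rewrite ps_coefN //= oppr0. Qed.

Lemma ps_constM c d : ps_const (c * d) = ps_const c * ps_const d.
Proof. by apply: ps_ext => n; rewrite ps_coefCM; case: n => //= n; rewrite mulr0. Qed.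

Lemma ps_constX c k : ps_const (c ^+ k) = ps_const c ^+ k.
Proof. by elim: k => [|k ih] //; rewrite !exprS ps_constM ih. Qed.

Lemma ps_const_nat k : ps_const k%:R = k%:R :> series R.
Proof. by elim: k => [|k ih] //; rewrite !mulrS ps_constD ih. Qed.

Lemma ps_scaleE c a : ps_scale c a = ps_const c * a.
Proof. by apply: ps_ext => n; rewrite ps_coefCM. Qed.

Lemma ps_powE a k : ps_pow a k = a ^+ k.
Proof. by elim: k => [|k ih] //=; rewrite ih exprS. Qed.

Lemma ps_divE a b : ps_div a b = a * ps_inv b.
Proof. by []. Qed.

Definition ps_ringE := (ps_addE, ps_subE, ps_oppE, ps_mulE, ps_const1E,
  ps_const_nat, ps_scaleE, ps_powE, ps_divE).

Lemma ps_coefXM g n : (X * g) n = if n is n'.+1 then g n' else 0.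
Proof.
case: n => [|n]; first by rewrite ps_coefM0 mul0r.
rewrite ps_coefM big_ord_recl big_ord_recl /= mul0r add0r mul1r subSS subn0.
by rewrite big1 ?addr0 // => i _; rewrite /ps_X mul0r.
Qed.

Lemma ps_coefXnM k g n : (X ^+ k * g) n = if (n < k)%N then 0 else g (n - k)%N.
Proof.
elim: k n g => [|k ih] n g; first by rewrite mul1r subn0.
rewrite exprSr -mulrA ih ps_coefXM ltnS.
case: (ltnP n k) => h; first by rewrite ltnW.
by rewrite -subn_eq0 subnS; case: (n - k)%N.
Qed.

Lemma ps_coefXn k n : (X ^+ k) n = (n == k)%:R.
Proof.
rewrite -[X ^+ k]mulr1 ps_coefXnM ps_coef1 subn_eq0.
by case: ltngtP.
Qed.

Lemma ps_coef0_exp a k : (a ^+ k) 0%N = a 0%N ^+ k.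
Proof. by elim: k => [|k ih] //; rewrite !exprS ps_coefM0 ih. Qed.

Lemma ps_divXK f : f 0%N = 0 -> X * ps_divX f = f.
Proof. by move=> f0; apply: ps_ext => -[|n]; rewrite ps_coefXM. Qed.

Lemma ps_mulX_inj : injective (fun f => X * f).
Proof.
move=> f g /(congr1 (fun u : series R => u _.+1)) eqXfg.
by apply: ps_ext => n; move: (eqXfg n); rewrite !ps_coefXM.
Qed.

(** * Composition *)

Lemma trunc_exp N f k : agree N (trunc N (f ^+ k)) (trunc N f ^+ k).
Proof.
elim: k => [|k ih] i hi; first by rewrite !expr0 coef_trunc hi ps_coef1 coef1.
rewrite !exprS coef_trunc hi (ps_coefM_trunc _ _ hi).
exact: (agree_mul (fun _ _ => erefl) ih).
Qed.

Lemma coef_mul_exp_eq0 p q k n : q`_0 = 0 -> (n < k)%N -> (p * q ^+ k)`_n = 0.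
Proof.
move=> q0 ltnk; have -> : q = drop_poly 1 q * 'X.
  by apply/polyP => -[|j]; rewrite coefMX coef_drop_poly // addn1.
by rewrite exprMn mulrA coefMXn ltnk.
Qed.

Lemma ps_coef_mul_exp_eq0 g f k n : f 0%N = 0 -> (n < k)%N -> (g * f ^+ k) n = 0.
Proof.
move=> f0 ltnk; have ltn := ltnSn n.
rewrite (ps_coefM_trunc _ _ ltn) (agree_mul (fun _ _ => erefl) (@trunc_exp _ _ _)) //.
by rewrite coef_mul_exp_eq0 // coef_trunc.
Qed.

Lemma ps_coef_exp_eq0 f k n : f 0%N = 0 -> (n < k)%N -> (f ^+ k) n = 0.
Proof. by move=> f0 ltnk; rewrite -[f ^+ k]mul1r ps_coef_mul_exp_eq0. Qed.

Lemma big_ord_shrink (F : nat -> R) m n : (m <= n)%N ->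
  (forall k, (m <= k < n)%N -> F k = 0) -> \sum_(k < n) F k = \sum_(k < m) F k.
Proof.
move=> lemn F0; rewrite -!(big_mkord xpredT) (big_cat_nat (leq0n m) lemn) /=.
by rewrite [X in _ + X]big1_seq ?addr0 // => k /andP[_]; rewrite mem_index_iota; apply: F0.
Qed.

(* Only meaningful when f 0 = 0, which makes the terms with k > n vanish. *)
Definition ps_comp a f : series R := fun n => \sum_(k < n.+1) a k * (f ^+ k) n.

Lemma ps_compE_ord a f n N : f 0%N = 0 -> (n < N)%N ->
  ps_comp a f n = \sum_(k < N) a k * (f ^+ k) n.
Proof.
move=> f0 ltnN; rewrite (@big_ord_shrink (fun k => a k * (f ^+ k) n) _ _ ltnN) //.
by move=> k /andP[ltnk _]; rewrite ps_coef_exp_eq0 ?mulr0.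
Qed.

Lemma ps_comp_trunc a f N n : f 0%N = 0 -> (n < N)%N ->
  ps_comp a f n = (trunc N a \Po trunc N f)`_n.
Proof.
move=> f0 ltnN; rewrite coef_comp_poly (ps_compE_ord _ f0 ltnN).
rewrite -(@big_ord_shrink (fun i => (trunc N a)`_i * (trunc N f ^+ i)`_n) _ _ (size_poly _ _)).
  by apply: eq_bigr => k _; rewrite coef_trunc ltn_ord -(trunc_exp _ _ ltnN) coef_trunc ltnN.
by move=> k /andP[lek _]; rewrite nth_default ?mul0r.
Qed.

Lemma agree_comp N p p' q : q`_0 = 0 -> agree N p p' -> agree N (p \Po q) (p' \Po q).
Proof.
move=> q0 hp i hi; apply/eqP; rewrite -subr_eq0 -coefB -comp_polyB coef_comp_poly.
apply/eqP/big1 => j _; case: (ltnP j N) => hj; first by rewrite coefB hp // subrr mul0r.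
by rewrite -[_ ^+ j]mul1r coef_mul_exp_eq0 ?mulr0 // (leq_trans hi hj).
Qed.

Lemma ps_comp_const c f : ps_comp (ps_const c) f = ps_const c.
Proof.
apply: ps_ext => n; rewrite /ps_comp big_ord_recl big1 ?addr0 => [|i _].
  by rewrite expr0 ps_coef1; case: n => [|n] /=; rewrite ?mulr1 ?mulr0.
by rewrite mul0r.
Qed.

Lemma ps_comp0 f : ps_comp 0 f = 0. Proof. exact: ps_comp_const. Qed.

Lemma ps_comp1 f : ps_comp 1 f = 1. Proof. exact: ps_comp_const. Qed.

Lemma ps_comp_nat k f : ps_comp k%:R f = k%:R.
Proof. by rewrite -ps_const_nat ps_comp_const. Qed.

Section Composition.
Variable f : series R.
Hypothesis f0 : f 0%N = 0.

Lemma ps_compM a b : ps_comp (a * b) f = ps_comp a f * ps_comp b f.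
Proof.
apply: ps_ext => n; have ltn := ltnSn n.
have tf0 : (trunc n.+1 f)`_0 = 0 by rewrite coef_trunc.
rewrite (ps_comp_trunc _ f0 ltn) (agree_comp tf0 (@trunc_mul _ _ _) ltn) comp_polyM.
rewrite (ps_coefM_trunc _ _ ltn); apply: (@agree_mul n.+1) => // i hi;
  by rewrite coef_trunc hi (ps_comp_trunc _ f0 hi).
Qed.

Lemma ps_compXn a k : ps_comp (a ^+ k) f = ps_comp a f ^+ k.
Proof. by elim: k => [|k ih]; rewrite ?expr0 ?ps_comp1 // !exprS ps_compM ih. Qed.

Lemma ps_compX : ps_comp X f = f.
Proof.
apply: ps_ext => -[|n]; first by rewrite /ps_comp big_ord1 mul0r f0.
rewrite /ps_comp big_ord_recl big_ord_recl /= mul0r add0r mul1r expr1.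
by rewrite big1 ?addr0 // => i _; rewrite mul0r.
Qed.

End Composition.

Lemma ps_compD a b f : ps_comp (a + b) f = ps_comp a f + ps_comp b f.
Proof.
apply: ps_ext => n; rewrite ps_coefD /ps_comp -big_split /=.
by apply: eq_bigr => k _; rewrite ps_coefD mulrDl.
Qed.

Lemma ps_compN a f : ps_comp (- a) f = - ps_comp a f.
Proof.
apply: ps_ext => n; rewrite ps_coefN /ps_comp -sumrN.
by apply: eq_bigr => k _; rewrite ps_coefN mulNr.
Qed.

Lemma ps_compB a b f : ps_comp (a - b) f = ps_comp a f - ps_comp b f.
Proof. by rewrite ps_compD ps_compN. Qed.

Lemma ps_comp_coef0 a f : ps_comp a f 0%N = a 0%N.
Proof. by rewrite /ps_comp big_ord1 expr0 ps_coef1 mulr1. Qed.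

Lemma ps_comp_coef1 a f : f 0%N = 0 -> ps_comp a f 1%N = a 1%N * f 1%N.
Proof.
move=> f0; rewrite /ps_comp big_ord_recl big_ord1 expr0 ps_coef1 mulr0 add0r.
by rewrite /bump /= expr1.
Qed.

Lemma ps_comp_scaleX a c n : ps_comp a (ps_const c * X) n = c ^+ n * a n.
Proof.
have coef_cXk k m : ((ps_const c * X) ^+ k) m = c ^+ k * (m == k)%:R.
  by rewrite exprMn -ps_constX ps_coefCM ps_coefXn.
rewrite /ps_comp (bigD1 ord_max) //= coef_cXk eqxx mulr1 mulrC big1 ?addr0 //.
by move=> i ne; rewrite coef_cXk eq_sym (negbTE (ne : i != n :> nat)) !mulr0.
Qed.

Lemma ps_comp_Xr a : ps_comp a X = a.
Proof.
by apply: ps_ext => n; rewrite -[X]mul1r ps_comp_scaleX expr1n mul1r.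
Qed.

Lemma negX_coef0 : (- X) 0%N = 0.
Proof. by rewrite ps_coefN oppr0. Qed.

Lemma ps_comp_negXK a : ps_comp (ps_comp a (- X)) (- X) = a.
Proof.
have negX : - X = ps_const (-1) * X by rewrite ps_constN mulN1r.
apply: ps_ext => n; rewrite negX !ps_comp_scaleX mulrA -exprMn.
by rewrite mulrNN mulr1 expr1n mul1r.
Qed.

(** * Inverses, square roots and binomial series *)

Definition ps_geom : series R := fun _ => 1.

Lemma ps_geomM : ps_geom * (1 - X) = 1.
Proof.
apply: ps_ext => n; rewrite mulrBr mulr1 ps_coefB mulrC ps_coefXM ps_coef1.
by case: n => [|n] /=; rewrite ?subr0 ?subrr.
Qed.

Lemma ps_invE f :
  ps_inv f = ps_const (f 0%N)^-1 * ps_comp ps_geom (1 - ps_const (f 0%N)^-1 * f).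
Proof.
apply: ps_ext => n; rewrite ps_coefCM /ps_inv /ps_comp; congr (_ * _).
by apply: eq_bigr => k _; rewrite mul1r ps_powE ps_subE ps_scaleE.
Qed.

Lemma ps_mulfV f : f 0%N != 0 -> f * ps_inv f = 1.
Proof.
move=> f0; set h := 1 - ps_const (f 0%N)^-1 * f.
have h0 : h 0%N = 0 by rewrite /h ps_coefB ps_coefCM mulVf // ps_coef1 subrr.
have geom_h : ps_comp ps_geom h * (1 - h) = 1.
  have -> : 1 - h = ps_comp (1 - X) h by rewrite ps_compB ps_comp1 ps_compX.
  by rewrite -ps_compM // ps_geomM ps_comp1.
by rewrite ps_invE -[RHS]geom_h /h; ring.
Qed.

Lemma ps_mul_unit_eq0 a b : b 0%N != 0 -> a * b = 0 -> a = 0.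
Proof. by move=> b0 ab0; rewrite -[a]mulr1 -(ps_mulfV b0) mulrA ab0 mul0r. Qed.

Lemma ps_inv_eq u s : u * s = 1 -> ps_inv s = u.
Proof.
move=> us1; have s0 : s 0%N != 0.
  apply/eqP => s00; move/(congr1 (fun a : series R => a 0%N)): us1.
  by rewrite ps_coefM0 s00 mulr0 ps_coef1 /= => /eqP; rewrite eq_sym oner_eq0.
by rewrite -[ps_inv s]mul1r -us1 -mulrA ps_mulfV ?mulr1.
Qed.

Lemma ps_comp_inv a f : f 0%N = 0 -> a 0%N != 0 ->
  ps_comp (ps_inv a) f = ps_inv (ps_comp a f).
Proof.
by move=> f0 a0; apply/esym/ps_inv_eq; rewrite -ps_compM // mulrC ps_mulfV ?ps_comp1.
Qed.

Lemma natS_neq0 n : n.+1%:R != 0 :> R.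
Proof. by rewrite pnatr_eq0. Qed.

Lemma fact_neq0 n : n`!%:R != 0 :> R.
Proof. by rewrite pnatr_eq0 -lt0n fact_gt0. Qed.

Lemma gbinom0 c : gbinom c 0 = 1.
Proof. by rewrite /gbinom big_ord0 divr1. Qed.

Lemma gbinomS c k : gbinom c k.+1 * k.+1%:R = gbinom c k * (c - k%:R).
Proof.
rewrite /gbinom big_ord_recr /= factS natrM.
by field; rewrite -mulrS natS_neq0 fact_neq0.
Qed.

Lemma gbinom_absorb c k : gbinom c k.+1 * k.+1%:R = c * gbinom (c - 1) k.
Proof.
rewrite /gbinom big_ord_recl /= factS natrM subr0.
under eq_bigr do rewrite /bump /= add1n -nat1r opprD addrA.
by field; rewrite -mulrS natS_neq0 fact_neq0.
Qed.

Lemma gbinom_Vandermonde k c d :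
  \sum_(i < k.+1) gbinom c i * gbinom d (k - i) = gbinom (c + d) k.
Proof.
elim: k c d => [|k ih] c d; first by rewrite big_ord1 !gbinom0 mulr1.
apply: (mulIf (natS_neq0 k)); rewrite gbinom_absorb big_distrl /=.
have -> : \sum_(i < k.+2) gbinom c i * gbinom d (k.+1 - i) * k.+1%:R =
    \sum_(i < k.+2) gbinom c i * gbinom d (k.+1 - i) * i%:R +
    \sum_(i < k.+2) gbinom c i * gbinom d (k.+1 - i) * (k.+1 - i)%:R.
  rewrite -big_split /=; apply: eq_bigr => i _.
  by rewrite -mulrDr -natrD subnKC // -ltnS.
rewrite big_ord_recl mulr0 add0r [X in _ + X]big_ord_recr /= subnn mulr0 addr0.
have left_sum : \sum_(i < k.+1) gbinom c (bump 0 i) * gbinom d (k.+1 - bump 0 i) *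
    (bump 0 i)%:R = c * \sum_(i < k.+1) gbinom (c - 1) i * gbinom d (k - i).
  rewrite big_distrr; apply: eq_bigr => i _.
  by rewrite /bump /= add1n subSS mulrAC gbinom_absorb mulrA.
have right_sum : \sum_(i < k.+1) gbinom c i * gbinom d (k.+1 - i) * (k.+1 - i)%:R
    = d * \sum_(i < k.+1) gbinom c i * gbinom (d - 1) (k - i).
  rewrite big_distrr; apply: eq_bigr => i _.
  by rewrite subSn ?leq_ord // -mulrA gbinom_absorb mulrCA.
by rewrite left_sum right_sum !ih addrAC addrA mulrDl.
Qed.

Definition binom_series c : series R := gbinom c.

Lemma binom_seriesD c d : binom_series c * binom_series d = binom_series (c + d).
Proof. by apply: ps_ext => k; rewrite ps_coefM gbinom_Vandermonde. Qed.

Lemma binom_series0 : binom_series 0 = 1.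
Proof.
apply: ps_ext => -[|k]; first by rewrite /binom_series gbinom0.
by rewrite /binom_series /gbinom big_ord_recl subrr !mul0r.
Qed.

Lemma binom_series1 : binom_series 1 = 1 + X.
Proof.
apply: ps_ext => -[|[|k]]; rewrite ps_coefD /binom_series ?gbinom0 ?addr0 //.
  by rewrite /gbinom big_ord1 subr0 divr1 add0r.
by rewrite /gbinom !big_ord_recl [_ - (lift _ _)%:R]subrr !(mul0r, mulr0) ps_coef1 /ps_X.
Qed.

Lemma ps_sqrtE f : ps_sqrt f = ps_comp (binom_series (1 / 2%:R)) (f - 1).
Proof. by apply: ps_ext => n; apply: eq_bigr => k _; rewrite ps_powE. Qed.

Lemma ps_sqrt_coef0 f : ps_sqrt f 0%N = 1.
Proof. by rewrite ps_sqrtE ps_comp_coef0 /binom_series gbinom0. Qed.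

Lemma ps_const_half : 2%:R * ps_const (1 / 2%:R) = 1 :> series R.
Proof. by rewrite -ps_const_nat -ps_constM mul1r divff ?natS_neq0. Qed.

Lemma ps_quadratic_root (p q s b : series R) : s * s = p ^+ 2 - 4%:R * q ->
  b = ps_const (1 / 2%:R) * (p - s) -> b ^+ 2 - p * b + q = 0.
Proof.
move=> s_sq ->; apply: (@ps_mul_unit_eq0 _ 4%:R); first by rewrite -ps_const_nat natS_neq0.
have -> : ((ps_const (1 / 2%:R) * (p - s)) ^+ 2 - p * (ps_const (1 / 2%:R) * (p - s)) + q)
    * 4%:R = (2%:R * ps_const (1 / 2%:R)) ^+ 2 * (p - s) ^+ 2
    - 2%:R * p * (2%:R * ps_const (1 / 2%:R)) * (p - s) + 4%:R * q by ring.
rewrite ps_const_half expr1n !mul1r mulr1.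
have -> : (p - s) ^+ 2 - 2%:R * p * (p - s) + 4%:R * q = s * s - (p ^+ 2 - 4%:R * q) by ring.
by rewrite s_sq subrr.
Qed.

Lemma ps_sqrtK f : f 0%N = 1 -> ps_sqrt f * ps_sqrt f = f.
Proof.
move=> f0; have u0 : (f - 1) 0%N = 0 by rewrite ps_coefB f0 ps_coef1 subrr.
rewrite ps_sqrtE -ps_compM // binom_seriesD -mulrDl -(natrD _ 1 1) divff ?natS_neq0 //.
by rewrite binom_series1 ps_compD ps_comp1 ps_compX // addrC subrK.
Qed.

Lemma central_binomE n : 'C(n.*2, n)%:R = gbinom (- (1 / 2%:R)) n * (- 4%:R) ^+ n :> R.
Proof.
pose T n : R := gbinom (- (1 / 2%:R)) n * (- 4%:R) ^+ n.
suff T_fact k : T k * k`!%:R * k`!%:R = (k.*2)`!%:R.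
  have := bin_fact (leq_addl n n); rewrite addnK addnn => bin_center.
  apply: (mulIf (fact_neq0 n)); apply: (mulIf (fact_neq0 n)).
  by rewrite -/(T n) T_fact -bin_center !natrM mulrA.
elim: k => [|k ih]; first by rewrite /T gbinom0 !mulr1.
have T_rec : T k.+1 * k.+1%:R = T k * (2%:R * (k.*2).+1%:R).
  by rewrite /T exprS mulrAC gbinomS -!natr1 -muln2 natrM; field.
rewrite doubleS !factS !natrM -ih.
have -> : T k.+1 * (k.+1%:R * k`!%:R) * (k.+1%:R * k`!%:R) =
  T k.+1 * k.+1%:R * k.+1%:R * k`!%:R * k`!%:R by ring.
by rewrite T_rec -!natr1 -muln2 natrM; ring.
Qed.

Lemma ps_W_binom : ps_W R = ps_comp (binom_series (- (1 / 2%:R))) (ps_const (- 4%:R) * X).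
Proof. by apply: ps_ext => n; rewrite ps_comp_scaleX /ps_W central_binomE mulrC. Qed.

(** * Riordan matrices *)

Lemma riordanE g f n k : riordan g f n k = (g * f ^+ k) n.
Proof. by rewrite /riordan ps_powE. Qed.

Lemma riordan_lower g f n k : f 0%N = 0 -> (n < k)%N -> riordan g f n k = 0.
Proof. by move=> f0 ltnk; rewrite riordanE ps_coef_mul_exp_eq0. Qed.

Lemma riordan_diag g f n : f 0%N = 0 -> riordan g f n n = g 0%N * f 1%N ^+ n.
Proof.
move=> f0; rewrite riordanE -{1}(ps_divXK f0) exprMn mulrCA ps_coefXnM ltnn subnn.
by rewrite ps_coefM0 ps_coef0_exp.
Qed.

Lemma mat_mul_riordan g f (B : mat R) n j : f 0%N = 0 ->
  mat_mul (riordan g f) B n j = (g * ps_comp (B ^~ j) f) n.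
Proof.
move=> f0; pose S := \sum_(k < n.+1) ps_const (B k j) * f ^+ k.
have -> : (g * ps_comp (B ^~ j) f) n = (g * S) n.
  rewrite !ps_coefM; apply: eq_bigr => i _.
  rewrite (ps_compE_ord _ f0 (leq_ltn_trans (leq_subr i n) (ltnSn n))) /S ps_coef_sum.
  by congr (_ * _); apply: eq_bigr => k _; rewrite ps_coefCM.
rewrite mulr_sumr ps_coef_sum; apply: eq_bigr => k _.
by rewrite mulrCA ps_coefCM riordanE mulrC.
Qed.

Theorem riordan_mul g f h l : f 0%N = 0 ->
  mat_mul (riordan g f) (riordan h l) = riordan (g * ps_comp h f) (ps_comp l f).
Proof.
move=> f0; apply: funext => n; apply: funext => k.
have col_k : riordan h l ^~ k = h * l ^+ k by apply: ps_ext => m; rewrite riordanE.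
by rewrite mat_mul_riordan // col_k riordanE ps_compM // ps_compXn // mulrA.
Qed.

Lemma riordan1X : riordan 1 X = mat_id R.
Proof. by apply: funext => n; apply: funext => k; rewrite riordanE mul1r ps_coefXn. Qed.

Definition lower_triangular (A : mat R) := forall i j, (i < j)%N -> A i j = 0.

Definition mat_block n (A : mat R) : 'M[R]_n := \matrix_(i, j) A i j.

Lemma mat_block_mul n A B : lower_triangular A ->
  mat_block n (mat_mul A B) = mat_block n A *m mat_block n B.
Proof.
move=> lowA; apply/matrixP => i j; rewrite !mxE.
under [RHS]eq_bigr do rewrite !mxE.
rewrite (@big_ord_shrink (fun k => A i k * B k j) _ _ (ltn_ord i)) //.
by move=> k /andP[ltik _]; rewrite lowA ?mul0r.
Qed.

Lemma mat_block_id n : mat_block n (mat_id R) = 1%:M.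
Proof. by apply/matrixP => i j; rewrite !mxE. Qed.

Lemma mat_block_inj (A B : mat R) : (forall n, mat_block n A = mat_block n B) -> A = B.
Proof.
move=> eqAB; apply: funext => i; apply: funext => j.
have lti : (i < (i + j).+1)%N by rewrite ltnS leq_addr.
have ltj : (j < (i + j).+1)%N by rewrite ltnS leq_addl.
move/matrixP/(_ (Ordinal lti) (Ordinal ltj)): (eqAB (i + j).+1).
by rewrite !mxE.
Qed.

Lemma mat_pow_strict_lower (N : mat R) : (forall i j, (i <= j)%N -> N i j = 0) ->
  forall m i j, (i < j + m)%N -> mat_pow N m i j = 0.
Proof.
move=> lowN; elim=> [|m ih] i j ltij.
  by rewrite /mat_pow /= /mat_id; move: ltij; rewrite addn0 => /ltn_eqF ->.
rewrite /mat_pow /= -/(mat_pow N m) /mat_mul big1 // => k _.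
have := ltn_ord k; rewrite ltnS leq_eqVlt => /orP[/eqP ->|ltki].
  by rewrite lowN ?mul0r.
by rewrite ih ?mulr0 // (leq_trans ltki) // -ltnS -addnS.
Qed.

Lemma mat_block_mat_inv n (A : mat R) : lower_triangular A -> (forall i, A i i != 0) ->
  mat_block n A *m mat_block n (mat_inv A) = 1%:M.
Proof.
move=> lowA diagA; pose N : mat R := fun i j => (i == j)%:R - A i j / A i i.
have lowN i j : (i <= j)%N -> N i j = 0.
  rewrite leq_eqVlt => /orP[/eqP ->|ltij]; first by rewrite /N eqxx divff // subrr.
  by rewrite /N (ltn_eqF ltij) lowA // mul0r subrr.
pose pw k := mat_block n (mat_pow N k).
have geom k : (1%:M - mat_block n N) *m (\sum_(m < k) pw m) = 1%:M - pw k.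
  elim: k => [|k ih]; first by rewrite big_ord0 mulmx0 /pw mat_block_id subrr.
  rewrite big_ord_recr /= mulmxDr ih mulmxBl mul1mx /pw -mat_block_mul => [|i j ltij].
    by rewrite addrA subrK.
  by rewrite lowN // ltnW.
have pw_n : pw n = 0.
  by apply/matrixP => i j; rewrite !mxE (mat_pow_strict_lower lowN) // ltn_addl.
have A_factor : mat_block n A = diag_mx (\row_j A j j) *m (1%:M - mat_block n N).
  apply/matrixP => i j; rewrite mul_diag_mx !mxE /N.
  by rewrite opprB addrCA subrr addr0 mulrC divfK.
have Ainv : mat_block n (mat_inv A) = (\sum_(m < n) pw m) *m diag_mx (\row_j (A j j)^-1).
  apply/matrixP => i j; rewrite mul_mx_diag !mxE summxE /mat_inv -/N.
  case: ltnP => [ltij|leji].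
    rewrite big1 ?mul0r // => m _; rewrite /pw mxE (mat_pow_strict_lower lowN) //.
    by rewrite (leq_trans ltij) ?leq_addr.
  congr (_ * _); under [RHS]eq_bigr do rewrite /pw mxE.
  apply/esym/(@big_ord_shrink (fun m => mat_pow N m i j) _ _ (ltn_ord i)) => k /andP[ltik _].
  by rewrite (mat_pow_strict_lower lowN) // (leq_trans ltik) // leq_addl.
rewrite A_factor Ainv mulmxA -(mulmxA (diag_mx _)) geom pw_n subr0 mulmx1.
apply/matrixP => i j; rewrite mul_diag_mx !mxE.
by case: eqP => [->|]; rewrite ?mulr0 ?mulr1n ?divff.
Qed.

Lemma mat_inv_unique (A B : mat R) : lower_triangular A -> (forall i, A i i != 0) ->
  mat_mul A B = mat_id R -> mat_inv A = B.
Proof.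
move=> lowA diagA AB1; apply: mat_block_inj => n.
have blockAB : mat_block n A *m mat_block n B = 1%:M.
  by rewrite -mat_block_mul // AB1 mat_block_id.
have := mulmx1C (mat_block_mat_inv n lowA diagA).
by move=> inv_blockA; rewrite -[mat_block n B]mul1mx -inv_blockA -mulmxA blockAB mulmx1.
Qed.

Theorem mat_inv_riordan g f h l : f 0%N = 0 ->
  g * ps_comp h f = 1 -> ps_comp l f = X -> mat_inv (riordan g f) = riordan h l.
Proof.
move=> f0 gh1 lf; apply: mat_inv_unique => [i j|i|].
- exact: riordan_lower.
- rewrite riordan_diag // mulf_eq0 negb_or expf_eq0 negb_and; apply/andP; split.
    apply: contra_eq_neq (congr1 (fun a : series R => a 0%N) gh1) => g0.
    by rewrite ps_coefM0 g0 mul0r ps_coef1 eq_sym oner_eq0.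
  apply/orP; right; apply: contra_eq_neq (congr1 (fun a : series R => a 1%N) lf) => f1.
  by rewrite ps_comp_coef1 // f1 mulr0 /ps_X eq_sym oner_eq0.
- by rewrite riordan_mul // gh1 lf riordan1X.
Qed.

Lemma riordan_conj_negX g f : f 0%N = 0 ->
  mat_mul (riordan 1 (- X)) (mat_mul (riordan g f) (riordan 1 (- X))) =
  riordan (ps_comp g (- X)) (- ps_comp f (- X)).
Proof.
move=> f0; rewrite riordan_mul // ps_comp1 mulr1 ps_compN ps_compX //.
by rewrite riordan_mul ?negX_coef0 // mul1r ps_compN.
Qed.

Lemma ps_comp_inv_X1X l : l 0%N = 0 -> l * (1 + l) = X -> ps_comp l (X * (1 + X)) = X.
Proof.
move=> l0 l_root; set f := X * (1 + X); have f0 : f 0%N = 0 by rewrite /f ps_coefXM.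
set T := ps_comp l f; have T0 : T 0%N = 0 by rewrite /T ps_comp_coef0.
have T_root : T * (1 + T) = f by rewrite -(ps_comp1 f) -ps_compD -ps_compM // l_root ps_compX.
apply/eqP; rewrite -subr_eq0; apply/eqP/(@ps_mul_unit_eq0 _ (1 + T + X)).
  by rewrite !ps_coefD T0 ps_coef1 /ps_X /= !addr0 oner_eq0.
have -> : (T - X) * (1 + T + X) = T * (1 + T) - X * (1 + X) by ring.
by rewrite T_root subrr.
Qed.

(** * The series C, M and W *)

Definition sqrt1m4X : series R := ps_sqrt (ps_sub (ps_const 1) (ps_scale 4%:R X)).
Definition xC : series R := X * ps_C R.

Lemma sqrt1m4X_sq : sqrt1m4X * sqrt1m4X = 1 - 4%:R * X.
Proof.
rewrite /sqrt1m4X ps_sqrtK; first by rewrite !ps_ringE.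
by rewrite ps_subE ps_scaleE ps_coefB ps_coefCM /ps_X /= mulr0 subr0.
Qed.

Lemma xC_half : xC = ps_const (1 / 2%:R) * (1 - sqrt1m4X).
Proof.
have b0 : (ps_const (1 / 2%:R) * (1 - sqrt1m4X)) 0%N = 0.
  by rewrite ps_coefCM ps_coefB /sqrt1m4X ps_sqrt_coef0 ps_coef1 subrr mulr0.
by rewrite -(ps_divXK b0) /xC /ps_C ps_scaleE ps_subE.
Qed.

Lemma sqrt1m4X_xC : sqrt1m4X = 1 - 2%:R * xC.
Proof. by rewrite xC_half mulrA ps_const_half mul1r subKr. Qed.

Lemma xC_coef0 : xC 0%N = 0.
Proof. by rewrite /xC ps_coefXM. Qed.

Lemma xC_root : xC ^+ 2 - xC + X = 0.
Proof. by rewrite -{2}[xC]mul1r (ps_quadratic_root _ xC_half) // sqrt1m4X_sq expr1n. Qed.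

Lemma xC_unique u : u 0%N = 0 -> u ^+ 2 - u + X = 0 -> u = xC.
Proof.
move=> u0 u_root; apply/eqP; rewrite -subr_eq0; apply/eqP.
apply: (@ps_mul_unit_eq0 _ (u + xC - 1)).
  by rewrite !ps_coefB ps_coefD u0 xC_coef0 ps_coef1 add0r sub0r oppr_eq0 oner_eq0.
have -> : (u - xC) * (u + xC - 1) = (u ^+ 2 - u + X) - (xC ^+ 2 - xC + X) by ring.
by rewrite u_root xC_root subrr.
Qed.

Lemma ps_W_sqrt1m4X : ps_W R = ps_inv sqrt1m4X.
Proof.
apply/esym/ps_inv_eq; rewrite ps_W_binom /sqrt1m4X ps_sqrtE !ps_ringE.
have -> : 1 - 4%:R * X - 1 = ps_const (- 4%:R) * X by rewrite ps_constN ps_const_nat; ring.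
rewrite -ps_compM ?ps_coefCM ?ps_coefXM ?mulr0 //.
by rewrite binom_seriesD addNr binom_series0 ps_comp1.
Qed.

Lemma ps_M_root : X ^+ 2 * ps_M R ^+ 2 - (1 - X) * ps_M R + 1 = 0.
Proof.
pose s := ps_sqrt (ps_sub (ps_pow (ps_sub (ps_const 1) X) 2) (ps_scale 4%:R (ps_pow X 2))).
have s_sq : s * s = (1 - X) ^+ 2 - 4%:R * X ^+ 2.
  rewrite ps_sqrtK; first by rewrite !ps_ringE.
  rewrite !ps_subE ps_const1E ps_scaleE !ps_powE ps_coefB ps_coefCM !ps_coef0_exp.
  by rewrite ps_coefB ps_coef1 /ps_X /= subr0 expr1n expr0n mulr0 subr0.
pose b := ps_scale (1 / 2%:R) (ps_sub (ps_sub (ps_const 1) X) s).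
have b_half : b = ps_const (1 / 2%:R) * (1 - X - s) by rewrite /b ps_scaleE !ps_subE.
have b0 : b 0%N = 0.
  rewrite b_half ps_coefCM !ps_coefB /s ps_sqrt_coef0 ps_coef1 /ps_X /=.
  by rewrite subr0 subrr mulr0.
have b_root : b ^+ 2 - (1 - X) * b + X ^+ 2 = 0 := ps_quadratic_root s_sq b_half.
pose b' := ps_divX b; have b_b' : b = X * b' by rewrite ps_divXK.
have b'_root : X * b' ^+ 2 - (1 - X) * b' + X = 0.
  by apply: ps_mulX_inj; rewrite mulr0 -b_root b_b'; ring.
have b'0 : b' 0%N = 0.
  move/(congr1 (fun a : series R => a 0%N)): b'_root.
  rewrite !ps_coefD ps_coefN ps_coefXM ps_coefM0 ps_coefB ps_coef1 /ps_X /=.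
  by rewrite subr0 mul1r addr0 sub0r ps_coef0 => /eqP; rewrite oppr_eq0 => /eqP.
have b'_M : b' = X * ps_M R by rewrite ps_divXK.
by apply: ps_mulX_inj; rewrite mulr0 -b'_root b'_M; ring.
Qed.

Definition inv_X1X : series R := - ps_comp xC (- X).

Lemma inv_X1X_coef0 : inv_X1X 0%N = 0.
Proof. by rewrite /inv_X1X ps_coefN ps_comp_coef0 xC_coef0 oppr0. Qed.

Lemma inv_X1X_root : inv_X1X * (1 + inv_X1X) = X.
Proof.
have -> : inv_X1X * (1 + inv_X1X) = ps_comp (xC ^+ 2 - xC + X) (- X) + X.
  by rewrite /inv_X1X ps_compD ps_compB (ps_compXn negX_coef0) (ps_compX negX_coef0); ring.
by rewrite xC_root ps_comp0 add0r.
Qed.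

Lemma FS_conj_inv : mat_mul (D_mat R) (mat_mul (mat_inv (FS R)) (D_mat R)) = riordan 1 xC.
Proof.
have f0 : (X * (1 + X)) 0%N = 0 by rewrite ps_coefXM.
rewrite /D_mat /FS !ps_ringE (@mat_inv_riordan _ _ 1 inv_X1X) //.
- by rewrite riordan_conj_negX ?inv_X1X_coef0 // ps_comp1 ps_compN opprK ps_comp_negXK.
- by rewrite ps_comp1 mulr1.
- by rewrite ps_comp_inv_X1X ?inv_X1X_coef0 ?inv_X1X_root.
Qed.

Lemma LS_conj_inv :
  mat_mul (D_mat R) (mat_mul (mat_inv (LS R)) (D_mat R)) = riordan (ps_inv sqrt1m4X) xC.
Proof.
have f0 : (X * (1 + X)) 0%N = 0 by rewrite ps_coefXM.
have unit0 : (1 + 2%:R * inv_X1X) 0%N != 0.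
  by rewrite ps_coefD ps_coefM0 inv_X1X_coef0 mulr0 addr0 ps_coef1 oner_eq0.
have comp_inv_X1X := ps_comp_inv_X1X inv_X1X_coef0 inv_X1X_root.
rewrite /D_mat /LS !ps_ringE (@mat_inv_riordan _ _ (ps_inv (1 + 2%:R * inv_X1X)) inv_X1X) //.
- rewrite riordan_conj_negX ?inv_X1X_coef0 // ps_comp_inv ?negX_coef0 //.
  rewrite ps_compD ps_comp1 (ps_compM negX_coef0) ps_comp_nat !ps_compN ps_comp_negXK.
  by rewrite opprK mulrN -sqrt1m4X_xC.
- rewrite ps_comp_inv // ps_compD ps_comp1 (ps_compM f0) ps_comp_nat comp_inv_X1X.
  by rewrite ps_mulfV // ps_coefD ps_coefM0 ps_coef1 /ps_X /= mulr0 addr0 oner_eq0.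
Qed.

Lemma M_root_xC (y m : series R) : y 0%N = 0 -> (1 - X) * (1 + y) = 1 ->
  y ^+ 2 * m ^+ 2 - (1 - y) * m + 1 = 0 -> (y + y ^+ 2 * m) * (1 - X) = xC.
Proof.
move=> y0 v_y m_root; apply: xC_unique.
  by rewrite ps_coefM0 ps_coefD ps_coefM0 ps_coef0_exp y0 expr0n mul0r addr0 mul0r.
have X_y : X * (1 + y) = y.
  have -> : X * (1 + y) = 1 + y - (1 - X) * (1 + y) by ring.
  by rewrite v_y addrC addKr.
set u := (y + y ^+ 2 * m) * (1 - X).
have u_y : u * (1 + y) = y + y ^+ 2 * m by rewrite /u -mulrA v_y mulr1.
apply: (@ps_mul_unit_eq0 _ ((1 + y) ^+ 2)).
  by rewrite ps_coef0_exp ps_coefD y0 ps_coef1 addr0 expr1n oner_eq0.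
have -> : (u ^+ 2 - u + X) * (1 + y) ^+ 2 =
    (u * (1 + y)) ^+ 2 - u * (1 + y) * (1 + y) + X * (1 + y) * (1 + y) by ring.
rewrite u_y X_y.
have -> : (y + y ^+ 2 * m) ^+ 2 - (y + y ^+ 2 * m) * (1 + y) + y * (1 + y) =
    y ^+ 2 * (y ^+ 2 * m ^+ 2 - (1 - y) * m + 1) by ring.
by rewrite m_root mulr0.
Qed.

Lemma pascal_mul_riordan :
  mat_mul (pascal_mat R)
    (riordan ((ps_M R - X * ps_M R - X ^+ 2 * ps_M R ^+ 2) * ps_inv (1 + X))
             ((X + X ^+ 2 * ps_M R) * ps_inv (1 + X))) = riordan 1 xC.
Proof.
rewrite /pascal_mat !ps_ringE; set y := X * ps_inv (1 - X).
have y0 : y 0%N = 0 by rewrite /y ps_coefXM.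
have v_unit : (1 - X) * ps_inv (1 - X) = 1.
  by rewrite ps_mulfV // ps_coefB ps_coef1 /ps_X /= subr0 oner_eq0.
have v_y : (1 - X) * (1 + y) = 1 by rewrite /y mulrDr mulr1 mulrCA v_unit mulr1 subrK.
pose Mt := ps_comp (ps_M R) y.
have Mt_root : y ^+ 2 * Mt ^+ 2 - (1 - y) * Mt + 1 = 0.
  have := congr1 (ps_comp ^~ y) ps_M_root; rewrite /= ps_comp0 => <-.
  by rewrite !(ps_compD, ps_compN, ps_comp1, ps_compM y0, ps_compXn y0, ps_compX y0).
have inv_1X : ps_comp (ps_inv (1 + X)) y = 1 - X.
  rewrite ps_comp_inv ?ps_coefD ?ps_coef1 ?ps_coefXM ?addr0 ?oner_eq0 //.
  by rewrite ps_compD ps_comp1 (ps_compX y0) (ps_inv_eq v_y).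
rewrite riordan_mul // !(ps_compM y0) inv_1X.
rewrite !(ps_compD, ps_compN, ps_compM y0, ps_compXn y0, ps_compX y0) -/Mt.
rewrite (M_root_xC y0 v_y Mt_root).
have -> : Mt - y * Mt - y ^+ 2 * Mt ^+ 2 = 1 - (y ^+ 2 * Mt ^+ 2 - (1 - y) * Mt + 1) by ring.
by rewrite Mt_root subr0 mul1r mulrC v_unit.
Qed.

Lemma ps_comp_inv1m2X_xC : ps_comp (ps_inv (1 - 2%:R * X)) xC = ps_W R.
Proof.
rewrite ps_comp_inv ?xC_coef0 //; last first.
  by rewrite ps_coefB ps_coefM0 ps_coef1 /ps_X /= mulr0 subr0 oner_eq0.
rewrite ps_compB ps_comp1 (ps_compM xC_coef0) ps_comp_nat (ps_compX xC_coef0).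
by rewrite -sqrt1m4X_xC ps_W_sqrt1m4X.
Qed.

End PowerSeriesRing.

Theorem lemma3p1 (R : numFieldType) :
  let x := ps_X R in
  let one := ps_const (1 : R) in
  let C := ps_C R in
  let M := ps_M R in
  let W := ps_W R in
  let D := D_mat R in
  let P := pascal_mat R in
  let Fhat := mat_mul D (mat_mul (mat_inv (FS R)) D) in
  let Lhat := mat_mul D (mat_mul (mat_inv (LS R)) D) in
  let xC := ps_mul x C in
  (* (M - x M - x^2 M^2) / (1 + x) *)
  let g1 := ps_div (ps_sub (ps_sub M (ps_mul x M))
                           (ps_mul (ps_pow x 2) (ps_pow M 2)))
                   (ps_add one x) in
  (* (x + x^2 M) / (1 + x) *)
  let f1 := ps_div (ps_add x (ps_mul (ps_pow x 2) M)) (ps_add one x) in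
  let G := ps_inv (ps_sub one (ps_scale 2%:R xC)) in
  (* (a) *)
  (Fhat = riordan one xC /\
   riordan one xC = mat_mul P (riordan g1 f1)) /\
  (* (b) *)
  (Lhat = riordan G xC /\
   riordan G xC = mat_mul (riordan W x) (mat_mul P (riordan g1 f1))) /\
  (* (c) *)
  (Lhat = mat_mul (riordan G x) Fhat /\
   mat_mul (riordan G x) Fhat = mat_mul (riordan W x) Fhat /\
   mat_mul (riordan W x) Fhat =
     mat_mul Fhat (riordan (ps_inv (ps_sub one (ps_scale 2%:R x))) x)).
Proof.
cbv zeta; rewrite !ps_ringE -/(xC R).
rewrite FS_conj_inv LS_conj_inv pascal_mul_riordan -sqrt1m4X_xC -ps_W_sqrt1m4X.
rewrite !riordan_mul ?xC_coef0 ?ps_coefXM // !ps_comp1 !ps_comp_Xr.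
by rewrite ps_comp_inv1m2X_xC (ps_compX (xC_coef0 R)) !mulr1 mul1r.
Qed.
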